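(* Let $\Omega$ be a countably infinite set and $G$ a subgroup of $S=\mathrm{Sym}(\Omega)$. Suppose there exist a sequence $(\alpha_i)_{i\in\omega}$ of distinct elements of $\Omega$ and nonempty subsets $D_i\subseteq\Omega^i$ ($i\in\omega$) such that: (i) for each $i$ and each $(\beta_0,\ldots,\beta_i)\in D_{i+1}$, we have $(\beta_0,\ldots,\beta_{i-1})\in D_i$; (ii) for each $i$ and each $(\beta_0,\ldots,\beta_{i-1})\in D_i$, there exist infinitely many $\beta\in\Omega$ with $(\beta_0,\ldots,\beta_{i-1},\beta)\in D_{i+1}$; (iii) whenever $(\beta_i)_{i\in\omega}\in\Omega^\omega$ satisfies $(\beta_0,\ldots,\beta_{i-1})\in D_i$ for every $i$, there exists $g\in G$ with $\beta_i=\alpha_ig$ for all $i$. Then $G\approx S$.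
   Context: $\mathrm{Sym}(\Omega)$ is the group of all permutations of $\Omega$, acting on the right. For subgroups $G_1,G_2\le S$: $G_1\preccurlyeq G_2$ means there is a finite $U\subseteq S$ with $G_1\le\langle G_2\cup U\rangle$, and $G_1\approx G_2$ means $G_1\preccurlyeq G_2$ and $G_2\preccurlyeq G_1$. *)

(* Permutations of Omega are represented as bijective functions
   Omega -> Omega; the right action alpha^g is written (g alpha), and the
   product g*h (first g, then h) is (fun x => h (g x)). *)
From Stdlib Require Import List.
Import ListNotations.

Definition bijective {T : Type} (f : T -> T) : Prop :=
  exists g : T -> T, (forall x, g (f x) = x) /\ (forall y, f (g y) = y).

Definition countably_infinite (T : Type) : Prop :=
  exists e : nat -> T, (forall m n, e m = e n -> m = n) /\ (forall x, exists n, e n = x).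

Definition Sym (T : Type) : (T -> T) -> Prop := fun f => bijective f.

Definition is_subgroup {T : Type} (G : (T -> T) -> Prop) : Prop :=
  (forall f, G f -> Sym T f) /\
  G (fun x => x) /\
  (forall f g, G f -> G g -> G (fun x => g (f x))) /\
  (forall f, G f -> exists h, G h /\ (forall x, h (f x) = x) /\ (forall y, f (h y) = y)).

Definition generated {T : Type} (A : (T -> T) -> Prop) : (T -> T) -> Prop :=
  fun f => forall H : (T -> T) -> Prop, is_subgroup H -> (forall a, A a -> H a) -> H f.

Definition preccurlyeq {T : Type} (G1 G2 : (T -> T) -> Prop) : Prop :=
  exists U : list (T -> T), (forall u, In u U -> Sym T u) /\
    (forall f, G1 f -> generated (fun a => G2 a \/ In a U) f).

Definition approx {T : Type} (G1 G2 : (T -> T) -> Prop) : Prop :=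
  preccurlyeq G1 G2 /\ preccurlyeq G2 G1.

Definition prefix {T : Type} (beta : nat -> T) (i : nat) : list T := map beta (seq 0 i).

(* Identify Omega with nat along a bijection and put A = {alpha_i}.  Conditions (ii) and (iii)
   let us label the finite words over nat injectively by points of Omega so that the labels along
   every infinite word form a branch of the tree D, hence have the form (alpha_i g) with g in G.
   For a strictly increasing j, a single involution W exchanges the labels of the words recording
   the gaps of j with those of the words marking its range; the two branches give g_c, g_d in G
   with W (g_c alpha_i) = g_d alpha_(j i), so <G, W> contains a map sending each alpha_i to
   alpha_(j i).  Four more permutations now generate Sym(Omega): such shifts conjugate a fixed
   locally finite permutation of A, universal for locally finite permutations, to each of them,
   and hence conjugate the swap of alpha_(2i) and alpha_(2i+1) to every locally finite involution
   of A; every involution of A is a product of two such; two involutions exchanging the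
   complement of A with parts of A reach every involution of Omega; and every permutation is a
   product of two involutions. *)

From Stdlib Require Import List Arith Lia ZArith Cantor.
From Stdlib Require Import ClassicalEpsilon FunctionalExtensionality ConstructiveEpsilon.
Import ListNotations.

Definition dec (P : Prop) : {P} + {~ P} := excluded_middle_informative P.

Definition choose {A : Type} {P : A -> Prop} (H : exists x, P x) : A :=
  proj1_sig (ClassicalEpsilon.constructive_indefinite_description P H).

Lemma choose_spec {A : Type} {P : A -> Prop} (H : exists x, P x) : P (choose H).
Proof.
  unfold choose. destruct ClassicalEpsilon.constructive_indefinite_description. assumption.
Qed.

Definition least (P : nat -> Prop) : nat :=
  match dec (exists n, P n) with
  | left H => proj1_sig (epsilon_smallest P (fun n => dec (P n)) H)
  | right _ => 0
  end.

Lemma least_spec (P : nat -> Prop) :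
  (exists n, P n) -> P (least P) /\ forall k, P k -> least P <= k.
Proof.
  intro H. unfold least. destruct (dec (exists n, P n)) as [H'|]; [|contradiction].
  destruct (epsilon_smallest P (fun n => dec (P n)) H') as [m [Pm Hm]]. auto.
Qed.

Lemma least_correct (P : nat -> Prop) : (exists n, P n) -> P (least P).
Proof. intro H. apply (least_spec P H). Qed.

Lemma least_le (P : nat -> Prop) k : P k -> least P <= k.
Proof. intro H. apply (least_spec P (ex_intro _ k H)), H. Qed.

Lemma least_ext (P Q : nat -> Prop) : (forall n, P n <-> Q n) -> least P = least Q.
Proof.
  intro E. destruct (dec (exists n, P n)) as [[n Pn]|NP].
  - assert (Qn : Q n) by (apply E, Pn).
    apply Nat.le_antisymm; apply least_le; apply E;
      [apply (least_correct Q) | apply (least_correct P)]; eauto.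
  - unfold least. destruct (dec (exists n, P n)); [contradiction|].
    destruct (dec (exists n, Q n)) as [[m Qm]|]; [|reflexivity].
    exfalso. apply NP. exists m. apply E, Qm.
Qed.

Definition increasing (j : nat -> nat) : Prop := forall i, j i < j (S i).

Lemma nondecreasing_le (c : nat -> nat) q q' :
  (forall q, c q <= c (S q)) -> q <= q' -> c q <= c q'.
Proof. intros Hc. induction 1 as [|q' _ IH]; [reflexivity|]. specialize (Hc q'). lia. Qed.

Lemma increasing_le j i i' : increasing j -> i <= i' -> j i <= j i'.
Proof. intro Hj. apply nondecreasing_le. intro k. specialize (Hj k). lia. Qed.

Lemma increasing_lt j i i' : increasing j -> i < i' -> j i < j i'.
Proof. intros Hj H. pose proof (Hj i). pose proof (increasing_le j (S i) i' Hj H). lia. Qed.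

Lemma increasing_ge j i : increasing j -> i <= j i.
Proof. intro Hj. induction i as [|i IH]; [lia|]. specialize (Hj i). lia. Qed.

Lemma increasing_inj j i i' : increasing j -> j i = j i' -> i = i'.
Proof.
  intros Hj E. destruct (Nat.lt_trichotomy i i') as [H|[H|H]]; [|assumption|];
    apply (increasing_lt j) in H; auto; lia.
Qed.

Section Segments.
Variable c : nat -> nat.
Hypothesis c_0 : c 0 = 0.
Hypothesis c_mono : forall q, c q <= c (S q).
Hypothesis c_unbounded : forall y, exists q, y < c q.

Definition segment (y : nat) : nat := least (fun q => y < c (S q)).

Lemma segment_spec y : c (segment y) <= y < c (S (segment y)).
Proof.
  assert (Ex : exists q, y < c (S q)).
  { destruct (c_unbounded y) as [q Hq]. exists q. specialize (c_mono q). lia. }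
  destruct (least_spec _ Ex) as [H1 H2]. fold (segment y) in H1, H2. split; [|exact H1].
  destruct (segment y) as [|q]; [lia|].
  destruct (Nat.lt_ge_cases y (c (S q))) as [H|H]; [specialize (H2 q H); lia | exact H].
Qed.

Lemma segment_unique y q : c q <= y < c (S q) -> segment y = q.
Proof.
  intros [H1 H2]. pose proof (least_le (fun q => y < c (S q)) q H2) as Hle. fold (segment y) in Hle.
  pose proof (segment_spec y) as Hs.
  destruct (Nat.lt_ge_cases (segment y) q) as [H|H]; [|lia].
  pose proof (nondecreasing_le c (S (segment y)) q c_mono H). lia.
Qed.
End Segments.

Section Enumeration.
Variable P : nat -> Prop.
Hypothesis P_infinite : forall N, exists x, N <= x /\ P x.

Fixpoint enum (i : nat) : nat :=
  match i with
  | 0 => least P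
  | S i' => least (fun x => P x /\ enum i' < x)
  end.

Lemma enum_next i : exists x, P x /\ enum i < x.
Proof. destruct (P_infinite (S (enum i))) as [x [H1 H2]]. exists x. split; [exact H2 | lia]. Qed.

Lemma enum_P i : P (enum i).
Proof.
  destruct i as [|i]; simpl.
  - apply least_correct. destruct (P_infinite 0) as [x [_ Hx]]. eauto.
  - apply (least_correct _ (enum_next i)).
Qed.

Lemma enum_increasing : increasing enum.
Proof. intro i. apply (least_correct _ (enum_next i)). Qed.

Lemma enum_onto y : P y -> exists i, enum i = y.
Proof.
  intro Py. destruct (dec (exists i, enum i = y)) as [H|N]; [exact H | exfalso].
  assert (Below : forall i, enum i < y).
  { induction i as [|i IH].
    - assert (enum 0 <= y) by (apply least_le, Py).
      destruct (Nat.eq_dec (enum 0) y); [exfalso; eauto | lia].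
    - assert (enum (S i) <= y) by (apply least_le; auto).
      destruct (Nat.eq_dec (enum (S i)) y); [exfalso; eauto | lia]. }
  specialize (Below y). pose proof (increasing_ge enum y enum_increasing). lia.
Qed.
End Enumeration.

Definition involution (f : nat -> nat) : Prop := forall x, f (f x) = x.

Lemma bijective_of_inj_surj (f : nat -> nat) :
  (forall x y, f x = f y -> x = y) -> (forall y, exists x, f x = y) -> bijective f.
Proof.
  intros Hinj Hsurj. exists (fun y => least (fun x => f x = y)). split.
  - intro x. apply Hinj, (least_correct (fun z => f z = f x)). eauto.
  - intro y. apply (least_correct (fun z => f z = y)), Hsurj.
Qed.

Lemma involution_bijective (f : nat -> nat) : involution f -> bijective f.
Proof. intro H. exists f. split; exact H. Qed.

Lemma bijective_inj {T : Type} (f : T -> T) : bijective f -> forall x y, f x = f y -> x = y.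
Proof. intros [g [Hgf _]] x y E. rewrite <- (Hgf x), <- (Hgf y), E. reflexivity. Qed.

Lemma mem_ext {T : Type} (K : (T -> T) -> Prop) f g : K f -> (forall x, f x = g x) -> K g.
Proof. intros Kf E. replace g with f by (apply functional_extensionality, E). exact Kf. Qed.

Section Subgroup.
Context {T : Type} {K : (T -> T) -> Prop} (HK : is_subgroup K).

Lemma subgroup_bijective f : K f -> bijective f.
Proof. apply HK. Qed.

Lemma subgroup_id : K (fun x => x).
Proof. apply HK. Qed.

Lemma subgroup_comp f g : K f -> K g -> K (fun x => g (f x)).
Proof. apply HK. Qed.

Lemma subgroup_inv f :
  K f -> exists h, K h /\ (forall x, h (f x) = x) /\ (forall y, f (h y) = y).
Proof. apply HK. Qed.

Lemma subgroup_conj_involution z f :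
  K z -> (forall x, z (z x) = x) -> K (fun x => z (f (z x))) -> K f.
Proof.
  intros Kz Hz Kzfz. apply mem_ext with (fun x => z (z (f (z (z x))))).
  - apply (subgroup_comp (fun x => z (f (z (z x)))) z); [|exact Kz].
    apply (subgroup_comp z (fun y => z (f (z y)))); assumption.
  - intro x. rewrite !Hz. reflexivity.
Qed.
End Subgroup.

(** * Permutations as products of two involutions *)

Section TwoInvolutions.
Variables f g : nat -> nat.
Hypothesis Hgf : forall x, g (f x) = x.
Hypothesis Hfg : forall y, f (g y) = y.

Definition zpow (k : Z) (x : nat) : nat :=
  if (0 <=? k)%Z then Nat.iter (Z.to_nat k) f x else Nat.iter (Z.to_nat (- k)) g x.

Lemma zpow_succ k x : zpow (k + 1) x = f (zpow k x).
Proof.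
  unfold zpow. destruct (Z.leb_spec 0 k), (Z.leb_spec 0 (k + 1)); try lia.
  - replace (Z.to_nat (k + 1)) with (S (Z.to_nat k)) by lia. reflexivity.
  - replace k with (-1)%Z by lia. simpl. rewrite Hfg. reflexivity.
  - replace (Z.to_nat (- k)) with (S (Z.to_nat (- (k + 1)))) by lia.
    simpl. rewrite Hfg. reflexivity.
Qed.

Lemma zpow_pred k x : zpow (k - 1) x = g (zpow k x).
Proof.
  replace (zpow k x) with (zpow ((k - 1) + 1) x) by (f_equal; lia).
  rewrite zpow_succ, Hgf. reflexivity.
Qed.

Lemma zpow_add k l x : zpow (k + l) x = zpow k (zpow l x).
Proof.
  revert x. induction k as [|k IH|k IH] using Z.peano_ind; intro x; [reflexivity| |].
  - replace (Z.succ k + l)%Z with (k + l + 1)%Z by lia. replace (Z.succ k) with (k + 1)%Z by lia.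
    rewrite !zpow_succ, IH. reflexivity.
  - replace (Z.pred k + l)%Z with (k + l - 1)%Z by lia. replace (Z.pred k) with (k - 1)%Z by lia.
    rewrite !zpow_pred, IH. reflexivity.
Qed.

Lemma zpow_sub_congr k l c r : zpow k r = zpow l r -> zpow (c - k) r = zpow (c - l) r.
Proof.
  intro E. replace (c - k)%Z with (c - k - l + l)%Z by lia.
  rewrite zpow_add, <- E, <- zpow_add. f_equal. lia.
Qed.

Definition orbit_rep (x : nat) : nat := least (fun r => exists k, zpow k r = x).

Lemma orbit_rep_spec x : exists k, zpow k (orbit_rep x) = x.
Proof. apply (least_correct (fun r => exists k, zpow k r = x)). exists x, 0%Z. reflexivity. Qed.

Lemma orbit_rep_zpow k x : orbit_rep (zpow k (orbit_rep x)) = orbit_rep x.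
Proof.
  destruct (orbit_rep_spec x) as [k0 Hk0]. apply least_ext. intro r. split.
  - intros [m Hm]. exists (k0 - k + m)%Z. rewrite zpow_add, Hm, <- zpow_add.
    replace (k0 - k + k)%Z with k0 by lia. exact Hk0.
  - intros [m Hm]. exists (k - k0 + m)%Z. rewrite zpow_add, Hm, <- Hk0 at 1. rewrite <- zpow_add.
    f_equal. lia.
Qed.

Definition orbit_index (x : nat) : Z := choose (orbit_rep_spec x).

Lemma orbit_index_spec x : zpow (orbit_index x) (orbit_rep x) = x.
Proof. apply (choose_spec (orbit_rep_spec x)). Qed.

(* On the orbit of [x], parametrised by [k |-> zpow k (orbit_rep x)], the reflection
   [k |-> c - k]; on a finite orbit the parameter is only defined modulo the period, which
   [zpow_sub_congr] makes harmless. *)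
Definition reflection (c : Z) (x : nat) : nat := zpow (c - orbit_index x) (orbit_rep x).

Lemma orbit_rep_reflection c x : orbit_rep (reflection c x) = orbit_rep x.
Proof. apply orbit_rep_zpow. Qed.

Lemma reflection_reflection c d x : reflection d (reflection c x) = zpow (d - c) x.
Proof.
  unfold reflection at 1. rewrite orbit_rep_reflection.
  rewrite (zpow_sub_congr _ (c - orbit_index x) d).
  - replace (d - (c - orbit_index x))%Z with (d - c + orbit_index x)%Z by lia.
    rewrite zpow_add, orbit_index_spec. reflexivity.
  - pose proof (orbit_index_spec (reflection c x)) as E.
    rewrite orbit_rep_reflection in E. exact E.
Qed.

Lemma reflection_involution c : involution (reflection c).
Proof. intro x. rewrite reflection_reflection, Z.sub_diag. reflexivity. Qed.
End TwoInvolutions.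

Lemma bijective_product_of_involutions (f : nat -> nat) : bijective f ->
  exists r0 r1, involution r0 /\ involution r1 /\ forall x, r1 (r0 x) = f x.
Proof.
  intros [g [Hgf Hfg]]. exists (reflection f g 0), (reflection f g 1).
  split; [|split]; try apply reflection_involution; auto.
  intro x. rewrite reflection_reflection by assumption. exact (zpow_succ f g Hfg 0 x).
Qed.

Lemma subgroup_of_involutions (K : (nat -> nat) -> Prop) : is_subgroup K ->
  (forall s, involution s -> K s) -> forall f, bijective f -> K f.
Proof.
  intros HK Hinv f Hf. destruct (bijective_product_of_involutions f Hf) as [r0 [r1 [H0 [H1 E]]]].
  apply (mem_ext K _ _ (subgroup_comp HK r0 r1 (Hinv r0 H0) (Hinv r1 H1)) E).
Qed.

(** * Permutations supported on the range of an injection *)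

Section Range.
Variable a : nat -> nat.
Hypothesis Ha : forall m n, a m = a n -> m = n.

Definition in_range (y : nat) : Prop := exists n, a n = y.

Definition range_inv (y : nat) : nat := least (fun n => a n = y).

Lemma range_inv_a i : range_inv (a i) = i.
Proof. apply Ha, (least_correct (fun n => a n = a i)). eauto. Qed.

Lemma a_range_inv y : in_range y -> a (range_inv y) = y.
Proof. apply (least_correct (fun n => a n = y)). Qed.

Definition lift (s : nat -> nat) (y : nat) : nat :=
  if dec (in_range y) then a (s (range_inv y)) else y.

Lemma lift_a s i : lift s (a i) = a (s i).
Proof.
  unfold lift. destruct (dec (in_range (a i))) as [_|N].
  - rewrite range_inv_a. reflexivity.
  - exfalso. apply N. exists i. reflexivity.
Qed.

Lemma lift_out s y : ~ in_range y -> lift s y = y.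
Proof. intro N. unfold lift. destruct (dec (in_range y)); [contradiction | reflexivity]. Qed.

Lemma lift_comp s t y : lift (fun x => s (t x)) y = lift s (lift t y).
Proof.
  destruct (dec (in_range y)) as [[n <-]|N].
  - rewrite !lift_a. reflexivity.
  - rewrite (lift_out t y N), !(lift_out _ y N). reflexivity.
Qed.

Lemma lift_bijective s : bijective s -> bijective (lift s).
Proof.
  intros [t [Hts Hst]]. exists (lift t).
  split; intro y; destruct (dec (in_range y)) as [[n <-]|N].
  - rewrite !lift_a, Hts. reflexivity.
  - rewrite !(lift_out _ y N). reflexivity.
  - rewrite !lift_a, Hst. reflexivity.
  - rewrite !(lift_out _ y N). reflexivity.
Qed.

(* For [p < 2], the involution exchanging each [y] outside the range with [a (2 * y + p)]. *)
Definition swap_out (p y : nat) : nat :=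
  if dec (in_range y) then
    if dec (range_inv y mod 2 = p /\ ~ in_range (range_inv y / 2)) then range_inv y / 2 else y
  else a (2 * y + p).

Lemma swap_out_out p y : ~ in_range y -> swap_out p y = a (2 * y + p).
Proof. intro N. unfold swap_out. destruct (dec (in_range y)); [contradiction | reflexivity]. Qed.

Lemma swap_out_in p m : ~ (m mod 2 = p /\ ~ in_range (m / 2)) -> swap_out p (a m) = a m.
Proof.
  intro N. unfold swap_out. rewrite range_inv_a.
  destruct (dec (in_range (a m))) as [_|N']; [|exfalso; apply N'; exists m; reflexivity].
  destruct (dec (m mod 2 = p /\ ~ in_range (m / 2))); [contradiction | reflexivity].
Qed.

Lemma swap_out_involution p : p < 2 -> involution (swap_out p).
Proof.
  intros Hp y. destruct (dec (in_range y)) as [[m <-]|N].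
  - destruct (dec (m mod 2 = p /\ ~ in_range (m / 2))) as [[E1 E2]|E].
    + unfold swap_out at 2. rewrite range_inv_a.
      destruct (dec (in_range (a m))) as [_|N]; [|exfalso; apply N; exists m; reflexivity].
      destruct (dec (m mod 2 = p /\ ~ in_range (m / 2))) as [_|N']; [|exfalso; tauto].
      rewrite swap_out_out by assumption. f_equal. pose proof (Nat.div_mod_eq m 2). lia.
    + rewrite !swap_out_in; auto.
  - rewrite (swap_out_out p y N). unfold swap_out. rewrite range_inv_a.
    destruct (dec (in_range (a (2 * y + p)))) as [_|N']; [|exfalso; apply N'; eexists; reflexivity].
    replace ((2 * y + p) mod 2) with p by (apply Nat.mod_unique with y; lia).
    replace ((2 * y + p) / 2) with y by (apply Nat.div_unique with p; lia).
    destruct (dec (p = p /\ ~ in_range y)) as [_|E]; [reflexivity | exfalso; tauto].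
Qed.
End Range.

Arguments in_range a y : clear implicits.

Definition restrict (T : nat -> nat -> Prop) (Q : nat -> nat) (x : nat) : nat :=
  if dec (T x (Q x)) then Q x else x.

Definition symmetric (T : nat -> nat -> Prop) : Prop := forall x y, T x y -> T y x.

Lemma restrict_involution T Q : symmetric T -> involution Q -> involution (restrict T Q).
Proof.
  intros HT HQ x. unfold restrict at 2. destruct (dec (T x (Q x))) as [H|H]; unfold restrict.
  - rewrite HQ. destruct (dec (T (Q x) x)) as [_|N]; [reflexivity | exfalso; apply N, HT, H].
  - destruct (dec (T x (Q x))); [contradiction | reflexivity].
Qed.

Lemma restrict_fixed T Q x : ~ T x (Q x) -> restrict T Q x = x.
Proof. unfold restrict. destruct (dec (T x (Q x))); tauto. Qed.

Lemma restrict_restrict T U Q x :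
  restrict T (restrict U Q) x = restrict (fun u v => T u v /\ U u v) Q x.
Proof.
  unfold restrict. destruct (dec (U x (Q x))) as [HU|NU].
  - destruct (dec (T x (Q x))), (dec (T x (Q x) /\ U x (Q x))); tauto.
  - destruct (dec (T x x)), (dec (T x (Q x) /\ U x (Q x))); first [reflexivity | tauto].
Qed.

Lemma restrict_split T Q x : symmetric T -> involution Q ->
  restrict T Q (restrict (fun u v => ~ T u v) Q x) = Q x.
Proof.
  intros HT HQ. unfold restrict at 2. destruct (dec (~ T x (Q x))) as [N|N]; unfold restrict.
  - rewrite HQ. destruct (dec (T (Q x) x)) as [H|]; [exfalso; apply N, HT, H | reflexivity].
  - destruct (dec (T x (Q x))) as [|H]; [reflexivity | contradiction].
Qed.

Section RangeGenerators.
Variable K : (nat -> nat) -> Prop.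
Hypothesis HK : is_subgroup K.
Variable a : nat -> nat.
Hypothesis Ha : forall m n, a m = a n -> m = n.
Hypothesis swap_out0_in : K (swap_out a 0).
Hypothesis swap_out1_in : K (swap_out a 1).
Hypothesis lift_in : forall s, involution s -> K (lift a s).

Lemma involution_fixing_complement Y :
  involution Y -> (forall y, ~ in_range a y -> Y y = y) -> K Y.
Proof.
  intros HY Hfix.
  assert (HA : forall i, in_range a (Y (a i))).
  { intro i. destruct (dec (in_range a (Y (a i)))) as [H|N]; [exact H|].
    exfalso. apply N. rewrite <- (Hfix _ N), HY. exists i. reflexivity. }
  set (s i := range_inv a (Y (a i))).
  assert (Es : forall i, a (s i) = Y (a i)) by (intro i; apply a_range_inv, HA).
  apply mem_ext with (lift a s).
  - apply lift_in. intro i. apply Ha. rewrite !Es, HY. reflexivity.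
  - intro y. destruct (dec (in_range a y)) as [[n <-]|N].
    + rewrite lift_a; auto.
    + rewrite lift_out, Hfix; auto.
Qed.

Lemma involution_fixing_swapped p Y : p < 2 -> involution Y ->
  (forall y, ~ in_range a y -> Y (a (2 * y + p)) = a (2 * y + p)) -> K Y.
Proof.
  intros Hp HY Hfix. pose proof (swap_out_involution a Ha p Hp) as Hz.
  assert (Kz : K (swap_out a p)) by (destruct p as [|[|]]; [assumption | assumption | lia]).
  apply (subgroup_conj_involution HK (swap_out a p) Y Kz Hz).
  apply involution_fixing_complement.
  - intro x. rewrite Hz, HY, Hz. reflexivity.
  - intros y N. rewrite (swap_out_out a p y N), (Hfix y N), <- (swap_out_out a p y N). apply Hz.
Qed.

Lemma involution_split T Q : symmetric T -> involution Q ->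
  K (restrict T Q) -> K (restrict (fun u v => ~ T u v) Q) -> K Q.
Proof.
  intros HT HQ K1 K2.
  apply mem_ext with (fun x => restrict T Q (restrict (fun u v => ~ T u v) Q x)).
  - apply subgroup_comp; assumption.
  - intro x. apply restrict_split; assumption.
Qed.

(* The pairs of [Q] are split into those inside the range, those outside it, and mixed pairs
   whose point in the range has odd, resp. even, index; [swap_out a 0] moves the second and
   third kind into the range, [swap_out a 1] the fourth. *)
Lemma involution_in_subgroup Q : involution Q -> K Q.
Proof.
  intro HQ.
  set (odd_point z := in_range a z /\ range_inv a z mod 2 = 1).
  set (both_in u v := in_range a u /\ in_range a v).
  set (both_out u v := ~ in_range a u /\ ~ in_range a v).
  set (with_odd u v := odd_point u \/ odd_point v).
  assert (Snot : forall T, symmetric T -> symmetric (fun u v => ~ T u v))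
    by (unfold symmetric; eauto).
  assert (Sin : symmetric both_in) by (unfold symmetric, both_in; tauto).
  assert (Sout : symmetric both_out) by (unfold symmetric, both_out; tauto).
  assert (Sodd : symmetric with_odd) by (unfold symmetric, with_odd; tauto).
  assert (Even : forall y, ~ odd_point (a (2 * y))).
  { intros y [_ E]. rewrite range_inv_a in E by exact Ha.
    replace (2 * y mod 2) with 0 in E by (apply Nat.mod_unique with y; lia). discriminate. }
  assert (Odd : forall y, odd_point (a (2 * y + 1))).
  { intro y. split; [eexists; reflexivity|]. rewrite range_inv_a by exact Ha.
    symmetry. apply Nat.mod_unique with y; lia. }
  apply (involution_split both_in); auto.
  { apply involution_fixing_complement; [apply restrict_involution; auto|].
    intros y N. apply restrict_fixed. intros [Hy _]. exact (N Hy). }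
  set (Q1 := restrict (fun u v => ~ both_in u v) Q).
  apply (involution_split both_out); [auto | apply restrict_involution; auto | |].
  { apply (involution_fixing_swapped 0);
      [lia | apply restrict_involution, restrict_involution; auto|].
    intros y _. unfold Q1. rewrite restrict_restrict. apply restrict_fixed.
    unfold both_out. intros [[Ny _] _]. apply Ny. eexists; reflexivity. }
  set (Q2 := restrict (fun u v => ~ both_out u v) Q1).
  assert (HQ2 : involution Q2) by (apply restrict_involution, restrict_involution; auto).
  apply (involution_split with_odd); auto.
  - apply (involution_fixing_swapped 0); [lia | apply restrict_involution; auto|].
    intros y _. unfold Q2, Q1. rewrite !restrict_restrict. apply restrict_fixed.
    rewrite Nat.add_0_r. unfold with_odd. intros [[[H|[Hin _]] _] Nin]; [exact (Even y H)|].
    apply Nin. split; [eexists; reflexivity | exact Hin].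
  - apply (involution_fixing_swapped 1); [lia | apply restrict_involution; auto|].
    intros y _. unfold Q2, Q1. rewrite !restrict_restrict. apply restrict_fixed.
    intros [[N _] _]. apply N. left. apply Odd.
Qed.
End RangeGenerators.

(** * A universal locally finite permutation *)

Fixpoint encode (l : list nat) : nat :=
  match l with [] => 0 | x :: l' => S (Cantor.to_nat (x, encode l')) end.

Lemma encode_inj l l' : encode l = encode l' -> l = l'.
Proof.
  revert l'. induction l as [|x l IH]; intros [|y l'] E; cbn [encode] in E;
    try discriminate; [reflexivity|].
  apply Nat.succ_inj, (f_equal Cantor.of_nat) in E. rewrite !Cantor.cancel_of_to in E.
  injection E as -> E. f_equal. apply IH, E.
Qed.

Lemma encode_cons_lt x l : encode l < encode (x :: l).
Proof. simpl. pose proof (Cantor.to_nat_non_decreasing x (encode l)). lia. Qed.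

Definition decode (n : nat) : list nat :=
  match dec (exists l, encode l = n) with left H => choose H | right _ => [] end.

Lemma decode_encode l : decode (encode l) = l.
Proof.
  unfold decode. destruct (dec (exists l', encode l' = encode l)) as [H|N].
  - apply encode_inj, (choose_spec H).
  - exfalso. apply N. eauto.
Qed.

Lemma nth_map_seq (f : nat -> nat) n x : x < n -> nth x (map f (seq 0 n)) (f 0) = f x.
Proof. intro Hx. rewrite map_nth, seq_nth by exact Hx. reflexivity. Qed.

Lemma finite_pigeonhole (f : nat -> nat) n :
  (forall x, x < n -> f x < n) -> (forall x y, x < n -> y < n -> f x = f y -> x = y) ->
  forall y, y < n -> exists x, x < n /\ f x = y.
Proof.
  intros Hrange Hinj y Hy.
  assert (ND : NoDup (map f (seq 0 n))).
  { apply NoDup_nth with (d := f 0). rewrite length_map, length_seq. intros i j Hi Hj E.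
    rewrite !nth_map_seq in E by assumption. apply Hinj; assumption. }
  assert (Incl : incl (map f (seq 0 n)) (seq 0 n)).
  { intros z Hz. apply in_map_iff in Hz. destruct Hz as [x [<- Hx]]. apply in_seq in Hx.
    apply in_seq. split; [lia|]. apply Hrange. lia. }
  assert (Len : length (seq 0 n) <= length (map f (seq 0 n))) by (rewrite length_map; reflexivity).
  assert (Hin : In y (seq 0 n)) by (apply in_seq; lia).
  apply (NoDup_length_incl ND Len Incl), in_map_iff in Hin.
  destruct Hin as [x [E Hx]]. apply in_seq in Hx. exists x. split; [lia | exact E].
Qed.

Definition pattern (r : nat) : list nat := decode (fst (Cantor.of_nat r)).

Lemma pattern_often l N : exists r, N <= r /\ pattern r = l.
Proof.
  exists (Cantor.to_nat (encode l, N)). split.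
  - pose proof (Cantor.to_nat_non_decreasing (encode l) N). lia.
  - unfold pattern. rewrite Cantor.cancel_of_to. apply decode_encode.
Qed.

(* A permutation of [{0, ..., length l - 1}] in one-line notation. *)
Definition perm_word (l : list nat) : Prop := NoDup l /\ forall y, In y l -> y < length l.

Definition block_size (r : nat) : nat := length (pattern r).

Definition block_perm (r x : nat) : nat :=
  if dec (perm_word (pattern r)) then nth x (pattern r) 0 else x.

Fixpoint block_start (r : nat) : nat :=
  match r with 0 => 0 | S r' => block_start r' + block_size r' end.

Lemma block_start_mono r : block_start r <= block_start (S r).
Proof. apply Nat.le_add_r. Qed.

Lemma block_start_grows r : exists r', block_start r < block_start r'.
Proof.
  destruct (pattern_often [0] r) as [r' [H E]]. exists (S r'). simpl. unfold block_size.
  rewrite E. simpl. pose proof (nondecreasing_le block_start r r' block_start_mono H). lia.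
Qed.

Lemma block_start_unbounded y : exists r, y < block_start r.
Proof.
  induction y as [|y [r Hr]]; [apply (block_start_grows 0)|].
  destruct (block_start_grows r) as [r' H]. exists r'. lia.
Qed.

Lemma block_perm_lt r x : x < block_size r -> block_perm r x < block_size r.
Proof.
  unfold block_perm, block_size. destruct (dec (perm_word (pattern r))) as [[_ Hw]|]; [|auto].
  intro Hx. apply Hw, nth_In, Hx.
Qed.

Lemma block_perm_inj r x y :
  x < block_size r -> y < block_size r -> block_perm r x = block_perm r y -> x = y.
Proof.
  unfold block_perm, block_size. destruct (dec (perm_word (pattern r))) as [[ND _]|]; [|auto].
  intros Hx Hy. apply (proj1 (NoDup_nth _ 0) ND _ _ Hx Hy).
Qed.

Definition block_of (y : nat) : nat := segment block_start y.

Lemma block_of_spec y : block_start (block_of y) <= y < block_start (S (block_of y)).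
Proof. exact (segment_spec _ eq_refl block_start_mono block_start_unbounded y). Qed.

Lemma block_of_unique y r : block_start r <= y < block_start (S r) -> block_of y = r.
Proof. exact (segment_unique _ eq_refl block_start_mono block_start_unbounded y r). Qed.

(* Runs through the blocks, acting on block [r] as the finite permutation [pattern r]
   whenever it is one; every finite permutation is the pattern of infinitely many blocks. *)
Definition universal_perm (y : nat) : nat :=
  block_start (block_of y) + block_perm (block_of y) (y - block_start (block_of y)).

Lemma universal_perm_block r x :
  x < block_size r -> universal_perm (block_start r + x) = block_start r + block_perm r x.
Proof.
  intro Hx. unfold universal_perm. rewrite (block_of_unique (block_start r + x) r) by (simpl; lia).
  do 3 f_equal. lia.
Qed.

Lemma block_decomposition y : exists r x, x < block_size r /\ y = block_start r + x.
Proof.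
  pose proof (block_of_spec y). simpl in *.
  exists (block_of y), (y - block_start (block_of y)). lia.
Qed.

Lemma universal_perm_bijective : bijective universal_perm.
Proof.
  apply bijective_of_inj_surj.
  - intros y y' E.
    destruct (block_decomposition y) as [r [x [Hx ->]]],
      (block_decomposition y') as [r' [x' [Hx' ->]]].
    rewrite !universal_perm_block in E by assumption.
    pose proof (block_perm_lt r x Hx). pose proof (block_perm_lt r' x' Hx').
    assert (Er : r = r').
    { rewrite <- (block_of_unique (block_start r + block_perm r x) r) by (simpl; lia).
      rewrite E. apply block_of_unique. simpl. lia. }
    subst r'. f_equal. apply (block_perm_inj r); [assumption | assumption | lia].
  - intro y. destruct (block_decomposition y) as [r [x [Hx ->]]].
    destruct (finite_pigeonhole (block_perm r) _ (block_perm_lt r)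
      (fun u v Hu Hv => block_perm_inj r u v Hu Hv) x Hx) as [u [Hu E]].
    exists (block_start r + u). rewrite universal_perm_block, E; auto.
Qed.

Definition locally_finite (p : nat -> nat) : Prop :=
  forall n, exists m, n <= m /\ forall x, x < m -> p x < m.

Section Universality.
Variable p : nat -> nat.
Hypothesis p_bij : bijective p.
Hypothesis p_lf : locally_finite p.

Fixpoint cut (q : nat) : nat :=
  match q with
  | 0 => 0
  | S q' => least (fun m => cut q' < m /\ forall x, x < m -> p x < m)
  end.

Lemma cut_spec q : cut q < cut (S q) /\ forall x, x < cut (S q) -> p x < cut (S q).
Proof.
  apply (least_correct (fun m => cut q < m /\ forall x, x < m -> p x < m)).
  destruct (p_lf (S (cut q))) as [m [H1 H2]]. exists m. split; [lia | exact H2].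
Qed.

Lemma cut_increasing : increasing cut.
Proof. intro q. apply cut_spec. Qed.

Lemma cut_closed q x : x < cut q -> p x < cut q.
Proof. destruct q as [|q]; [simpl; lia | apply cut_spec]. Qed.

Lemma p_cut_segment q x : cut q <= x < cut (S q) -> cut q <= p x < cut (S q).
Proof.
  intros [H1 H2]. split; [|apply cut_spec, H2].
  destruct (Nat.lt_ge_cases (p x) (cut q)) as [H|H]; [exfalso | exact H].
  destruct (finite_pigeonhole p (cut q) (cut_closed q)
    (fun u v _ _ => bijective_inj p p_bij u v) (p x) H) as [u [Hu E]].
  apply (bijective_inj p p_bij) in E. lia.
Qed.

Definition cut_of (i : nat) : nat := segment cut i.

Lemma cut_mono q : cut q <= cut (S q).
Proof. apply Nat.lt_le_incl, cut_increasing. Qed.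

Lemma cut_unbounded i : exists q, i < cut q.
Proof. exists (S i). pose proof (increasing_ge cut (S i) cut_increasing). lia. Qed.

Lemma cut_of_spec i : cut (cut_of i) <= i < cut (S (cut_of i)).
Proof. exact (segment_spec cut eq_refl cut_mono cut_unbounded i). Qed.

Lemma cut_of_unique i q : cut q <= i < cut (S q) -> cut_of i = q.
Proof. exact (segment_unique cut eq_refl cut_mono cut_unbounded i q). Qed.

Definition cut_pattern (q : nat) : list nat :=
  map (fun x => p (cut q + x) - cut q) (seq 0 (cut (S q) - cut q)).

Lemma length_cut_pattern q : length (cut_pattern q) = cut (S q) - cut q.
Proof. unfold cut_pattern. rewrite length_map, length_seq. reflexivity. Qed.

Lemma nth_cut_pattern q x :
  x < cut (S q) - cut q -> nth x (cut_pattern q) 0 = p (cut q + x) - cut q.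
Proof.
  intro Hx. unfold cut_pattern.
  rewrite nth_indep with (d' := (fun x => p (cut q + x) - cut q) 0)
    by (rewrite length_map, length_seq; exact Hx).
  apply (nth_map_seq (fun x => p (cut q + x) - cut q)), Hx.
Qed.

Lemma cut_pattern_perm_word q : perm_word (cut_pattern q).
Proof.
  split.
  - apply NoDup_nth with (d := 0). rewrite length_cut_pattern. intros x y Hx Hy E.
    rewrite !nth_cut_pattern in E by assumption.
    pose proof (p_cut_segment q (cut q + x) ltac:(lia)).
    pose proof (p_cut_segment q (cut q + y) ltac:(lia)).
    assert (E' : p (cut q + x) = p (cut q + y)) by lia.
    apply (bijective_inj p p_bij) in E'. lia.
  - intros y Hy. rewrite length_cut_pattern.
    apply In_nth with (d := 0) in Hy. destruct Hy as [x [Hx <-]].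
    rewrite length_cut_pattern in Hx. rewrite nth_cut_pattern by exact Hx.
    pose proof (p_cut_segment q (cut q + x) ltac:(lia)). lia.
Qed.

(* The block of [universal_perm] hosting the [q]-th cut segment of [p]. *)
Fixpoint slot (q : nat) : nat :=
  match q with
  | 0 => least (fun r => pattern r = cut_pattern 0)
  | S q' =>
    least (fun r => pattern r = cut_pattern (S q') /\ block_start (S (slot q')) <= block_start r)
  end.

Lemma slot_next q :
  exists r, pattern r = cut_pattern (S q) /\ block_start (S (slot q)) <= block_start r.
Proof.
  destruct (pattern_often (cut_pattern (S q)) (S (slot q))) as [r [H1 H2]].
  exists r. split; [exact H2 | apply (nondecreasing_le _ _ _ block_start_mono H1)].
Qed.

Lemma slot_spec q :
  pattern (slot q) = cut_pattern q /\ block_start (S (slot q)) <= block_start (slot (S q)).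
Proof.
  split; [destruct q as [|q] |]; [| apply (least_correct _ (slot_next q)) ..].
  apply (least_correct (fun r => pattern r = cut_pattern 0)).
  destruct (pattern_often (cut_pattern 0) 0) as [r [_ H]]. eauto.
Qed.

Lemma block_size_slot q : block_size (slot q) = cut (S q) - cut q.
Proof. unfold block_size. rewrite (proj1 (slot_spec q)). apply length_cut_pattern. Qed.

Lemma block_perm_slot q x :
  x < cut (S q) - cut q -> block_perm (slot q) x = p (cut q + x) - cut q.
Proof.
  intro Hx. unfold block_perm. rewrite (proj1 (slot_spec q)).
  destruct (dec (perm_word (cut_pattern q))) as [_|N].
  - apply nth_cut_pattern, Hx.
  - exfalso. apply N, cut_pattern_perm_word.
Qed.

Definition embedding (i : nat) : nat := block_start (slot (cut_of i)) + (i - cut (cut_of i)).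

Lemma embedding_conj i : universal_perm (embedding i) = embedding (p i).
Proof.
  pose proof (cut_of_spec i) as Hi. unfold embedding. set (q := cut_of i) in *.
  rewrite universal_perm_block by (rewrite block_size_slot; lia).
  rewrite block_perm_slot by lia.
  rewrite (cut_of_unique (p i) q (p_cut_segment q i Hi)).
  replace (cut q + (i - cut q)) with i by lia. reflexivity.
Qed.

Lemma embedding_increasing : increasing embedding.
Proof.
  intro i. pose proof (cut_of_spec i) as Hi. unfold embedding.
  destruct (Nat.lt_ge_cases (S i) (cut (S (cut_of i)))) as [H|H].
  - rewrite (cut_of_unique (S i) (cut_of i)) by lia. lia.
  - pose proof (cut_increasing (S (cut_of i))).
    rewrite (cut_of_unique (S i) (S (cut_of i))) by lia.
    pose proof (proj2 (slot_spec (cut_of i))) as Hs. cbn [block_start] in Hs.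
    rewrite block_size_slot in Hs. lia.
Qed.
End Universality.

Lemma universal_perm_universal p : bijective p -> locally_finite p ->
  exists j, increasing j /\ forall i, universal_perm (j i) = j (p i).
Proof.
  intros Hbij Hlf. exists (embedding p).
  split; [apply embedding_increasing | apply embedding_conj]; assumption.
Qed.

(** * Locally finite involutions *)

Lemma list_max_ge (l : list nat) x : In x l -> x <= list_max l.
Proof. intro H. apply (proj1 (Forall_forall _ l) (proj1 (list_max_le l _) (le_n _)) x H). Qed.

Lemma fresh_nat (l : list nat) : exists y, ~ In y l.
Proof. exists (S (list_max l)). intro H. apply list_max_ge in H. lia. Qed.

Lemma free_below (l : list nat) e :
  NoDup l -> (forall y, In y l -> y < e) -> length l < e -> exists y, y < e /\ ~ In y l.
Proof.
  intros ND Hl Hlen. destruct (dec (exists y, y < e /\ ~ In y l)) as [H|N]; [exact H | exfalso].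
  assert (Incl : incl (seq 0 e) l).
  { intros y Hy. apply in_seq in Hy. destruct (dec (In y l)) as [|Ny]; [assumption|].
    exfalso. apply N. exists y. split; [lia | exact Ny]. }
  pose proof (NoDup_incl_length (seq_NoDup e 0) Incl). rewrite length_seq in H. lia.
Qed.

Section Pairing.
Variable s : nat -> nat.
Hypothesis s_inv : involution s.
Hypothesis s_fpf : forall x, s x <> x.
Hypothesis s_lf : locally_finite s.

Fixpoint paired (i : nat) : list nat :=
  match i with
  | 0 => []
  | S i' => let y := least (fun y => ~ In y (paired i')) in paired i' ++ [y; s y]
  end.

Definition next_unpaired (i : nat) : nat := least (fun y => ~ In y (paired i)).

Lemma next_unpaired_spec i :
  ~ In (next_unpaired i) (paired i) /\ forall y, ~ In y (paired i) -> next_unpaired i <= y.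
Proof. apply (least_spec (fun y => ~ In y (paired i))), fresh_nat. Qed.

Lemma paired_S i : paired (S i) = paired i ++ [next_unpaired i; s (next_unpaired i)].
Proof. reflexivity. Qed.

Lemma paired_invariant i : NoDup (paired i) /\ (forall y, In y (paired i) -> In (s y) (paired i)) /\
  length (paired i) = 2 * i.
Proof.
  induction i as [|i [ND [Cl Len]]]; [repeat split; [constructor | intros _ [] ]|].
  rewrite paired_S. destruct (next_unpaired_spec i) as [N1 _]. set (y := next_unpaired i) in *.
  assert (N2 : ~ In (s y) (paired i)) by (intro H; apply Cl in H; rewrite s_inv in H; auto).
  repeat split.
  - apply NoDup_app; [assumption | |].
    + repeat constructor; simpl; [intros [H|[]]; apply (s_fpf y); auto | tauto].
    + intros z Hz [<-|[<-|[]]]; auto.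
  - intros z Hz. apply in_or_app. apply in_app_or in Hz. destruct Hz as [Hz|[<-|[<-|[]]]].
    + left. apply Cl, Hz.
    + right. simpl. auto.
    + right. simpl. rewrite s_inv. auto.
  - rewrite length_app, Len. simpl. lia.
Qed.

Definition pairing (n : nat) : nat :=
  if Nat.even n then next_unpaired (Nat.div2 n) else s (next_unpaired (Nat.div2 n)).

Lemma pairing_even i : pairing (2 * i) = next_unpaired i.
Proof. unfold pairing. rewrite Nat.even_mul, Nat.div2_double. reflexivity. Qed.

Lemma pairing_odd i : pairing (2 * i + 1) = s (next_unpaired i).
Proof.
  unfold pairing. replace (2 * i + 1) with (S (2 * i)) by lia.
  rewrite Nat.even_succ, Nat.odd_mul, Nat.div2_succ_double. reflexivity.
Qed.

Lemma paired_map i : paired i = map pairing (seq 0 (2 * i)).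
Proof.
  induction i as [|i IH]; [reflexivity|]. rewrite paired_S, IH.
  replace (2 * S i) with (2 * i + 2) by lia. rewrite seq_app, map_app.
  replace (seq (0 + 2 * i) 2) with [2 * i; 2 * i + 1] by (simpl; repeat f_equal; lia).
  cbn [map]. rewrite pairing_even, pairing_odd. reflexivity.
Qed.

Section Closed.
Variable e : nat.
Hypothesis e_closed : forall x, x < e -> s x < e.

Lemma paired_bound i : 2 * i <= e + 1 -> forall y, In y (paired i) -> y < e.
Proof.
  induction i as [|i IH]; [intros _ _ []|]. intros Hi y Hy.
  destruct (paired_invariant i) as [ND [_ Len]].
  destruct (free_below (paired i) e ND (IH ltac:(lia)) ltac:(lia)) as [z [Hz Nz]].
  destruct (next_unpaired_spec i) as [_ Hmin]. specialize (Hmin z Nz).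
  rewrite paired_S in Hy. apply in_app_or in Hy.
  destruct Hy as [Hy|[<-|[<-|[]]]]; [apply IH; [lia | exact Hy] | lia | apply e_closed; lia].
Qed.

Lemma closed_even : e = 2 * Nat.div2 e.
Proof.
  destruct (Nat.Even_or_Odd e) as [[k ->]|[k Ek]]; [rewrite Nat.div2_double; reflexivity | exfalso].
  destruct (paired_invariant (S k)) as [ND [_ Len]].
  assert (Incl : incl (paired (S k)) (seq 0 e)).
  { intros y Hy. apply in_seq. apply (paired_bound (S k)) in Hy; lia. }
  pose proof (NoDup_incl_length ND Incl). rewrite Len, length_seq in H. lia.
Qed.

Lemma paired_closed : incl (paired (Nat.div2 e)) (seq 0 e).
Proof.
  intros y Hy. apply in_seq. apply (paired_bound (Nat.div2 e)) in Hy; [lia|].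
  rewrite <- closed_even. lia.
Qed.

Lemma pairing_closed x : x < e -> pairing x < e.
Proof.
  intro Hx. apply in_seq with (start := 0), paired_closed.
  rewrite paired_map, <- closed_even. apply in_map, in_seq. lia.
Qed.

Lemma pairing_onto y : y < e -> exists x, pairing x = y.
Proof.
  intro Hy. destruct (paired_invariant (Nat.div2 e)) as [ND [_ Len]].
  rewrite <- closed_even in Len.
  assert (Hin : In y (seq 0 e)) by (apply in_seq; lia).
  assert (Hlen : length (seq 0 e) <= length (paired (Nat.div2 e))) by (rewrite length_seq; lia).
  apply (NoDup_length_incl ND Hlen paired_closed) in Hin.
  rewrite paired_map, in_map_iff in Hin. destruct Hin as [x [E _]]. eauto.
Qed.
End Closed.

Lemma pairing_lf : locally_finite pairing.
Proof.
  intro n. destruct (s_lf n) as [m [Hm Hclosed]]. exists m. split; [exact Hm|].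
  intros x. apply pairing_closed, Hclosed.
Qed.

Lemma pairing_bijective : bijective pairing.
Proof.
  apply bijective_of_inj_surj.
  - intros x y E.
    destruct (paired_invariant (S (x + y))) as [ND _]. rewrite paired_map in ND.
    apply (proj1 (NoDup_nth _ (pairing 0)) ND x y); rewrite ?length_map, ?length_seq; try lia.
    rewrite !nth_map_seq by lia. exact E.
  - intro y. destruct (s_lf (S y)) as [m [Hm Hclosed]]. apply (pairing_onto m Hclosed). lia.
Qed.
End Pairing.

Lemma fixed_point_free_pairing s : involution s -> (forall x, s x <> x) -> locally_finite s ->
  exists p, bijective p /\ locally_finite p /\ forall i, s (p (2 * i)) = p (2 * i + 1).
Proof.
  intros Hinv Hfpf Hlf. exists (pairing s). repeat split.
  - apply pairing_bijective; assumption.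
  - apply pairing_lf; assumption.
  - intro i. rewrite pairing_even, pairing_odd. reflexivity.
Qed.

Definition infinite_support (s : nat -> nat) : Prop := forall N, exists x, N <= x /\ s x <> x.

Definition lf_involution (s : nat -> nat) : Prop := involution s /\ locally_finite s.

Section Compression.
Variable s : nat -> nat.
Hypothesis s_inv : involution s.
Hypothesis s_lf : locally_finite s.
Hypothesis s_inf : infinite_support s.

Definition support_enum : nat -> nat := enum (fun x => s x <> x).

Lemma support_enum_increasing : increasing support_enum.
Proof. apply (enum_increasing (fun x => s x <> x)), s_inf. Qed.

Lemma support_enum_moved i : s (support_enum i) <> support_enum i.
Proof. apply (enum_P (fun x => s x <> x)), s_inf. Qed.

Lemma support_enum_onto y : s y <> y -> exists i, support_enum i = y.
Proof. apply (enum_onto (fun x => s x <> x)), s_inf. Qed.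

Definition compressed (i : nat) : nat := least (fun j => support_enum j = s (support_enum i)).

Lemma support_enum_compressed i : support_enum (compressed i) = s (support_enum i).
Proof.
  apply (least_correct (fun j => support_enum j = s (support_enum i))), support_enum_onto.
  rewrite s_inv. intro E. apply (support_enum_moved i). auto.
Qed.

Lemma compressed_involution : involution compressed.
Proof.
  intro i. apply (increasing_inj support_enum _ _ support_enum_increasing).
  rewrite !support_enum_compressed, s_inv. reflexivity.
Qed.

Lemma compressed_fixed_point_free i : compressed i <> i.
Proof.
  intro E. apply (support_enum_moved i). rewrite <- support_enum_compressed, E. reflexivity.
Qed.

Lemma compressed_lf : locally_finite compressed.
Proof.
  intro n. destruct (s_lf (S (support_enum n))) as [m [Hm Hclosed]].
  assert (Ex : exists i, m <= support_enum i)
    by (exists m; apply (increasing_ge _ _ support_enum_increasing)).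
  destruct (least_spec _ Ex) as [He Hmin]. set (e := least _) in He, Hmin.
  assert (Below : forall i, i < e -> support_enum i < m).
  { intros i Hi. destruct (Nat.lt_ge_cases (support_enum i) m) as [H|H]; [exact H|].
    specialize (Hmin i H). lia. }
  exists e. split.
  - destruct (Nat.le_gt_cases n e) as [H|H]; [exact H|].
    pose proof (increasing_le _ e n support_enum_increasing ltac:(lia)). lia.
  - intros i Hi. specialize (Hclosed _ (Below i Hi)). rewrite <- support_enum_compressed in Hclosed.
    destruct (Nat.lt_ge_cases (compressed i) e) as [H|H]; [exact H|].
    pose proof (increasing_le _ _ _ support_enum_increasing H). lia.
Qed.
End Compression.

Definition swap_pairs (n : nat) : nat := if Nat.even n then S n else Nat.pred n.

Lemma swap_pairs_even i : swap_pairs (2 * i) = 2 * i + 1.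
Proof. unfold swap_pairs. rewrite Nat.even_mul. simpl. lia. Qed.

Lemma swap_pairs_odd i : swap_pairs (2 * i + 1) = 2 * i.
Proof. unfold swap_pairs. rewrite Nat.even_add, Nat.even_mul. simpl. lia. Qed.

Lemma swap_pairs_cases x :
  (exists i, x = 2 * i /\ swap_pairs x = 2 * i + 1) \/
  (exists i, x = 2 * i + 1 /\ swap_pairs x = 2 * i).
Proof.
  destruct (Nat.Even_or_Odd x) as [[i ->]|[i ->]]; [left | right]; exists i;
    [rewrite swap_pairs_even | rewrite swap_pairs_odd]; auto.
Qed.

Lemma swap_pairs_involution : involution swap_pairs.
Proof.
  intro x. destruct (swap_pairs_cases x) as [[i [-> ->]]|[i [-> ->]]];
    [apply swap_pairs_odd | apply swap_pairs_even].
Qed.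

Lemma swap_pairs_lt x m : x < 2 * m -> swap_pairs x < 2 * m.
Proof. destruct (swap_pairs_cases x) as [[i [-> ->]]|[i [-> ->]]]; lia. Qed.

Lemma swap_pairs_ge x m : 2 * m <= x -> 2 * m <= swap_pairs x.
Proof. destruct (swap_pairs_cases x) as [[i [-> ->]]|[i [-> ->]]]; lia. Qed.

Definition patch (M : nat) (f : nat -> nat) (x : nat) : nat :=
  if 2 * M <=? x then swap_pairs x else f x.

Lemma patch_lf_involution M f : involution f -> (forall x, x < 2 * M -> f x < 2 * M) ->
  lf_involution (patch M f) /\ infinite_support (patch M f).
Proof.
  intros Hf Hclosed. unfold patch.
  repeat split.
  - intro x. destruct (Nat.leb_spec (2 * M) x) as [H|H].
    + pose proof (swap_pairs_ge x M H).
      destruct (Nat.leb_spec (2 * M) (swap_pairs x)); [apply swap_pairs_involution | lia].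
    + pose proof (Hclosed x H). destruct (Nat.leb_spec (2 * M) (f x)); [lia | apply Hf].
  - intro n. exists (2 * (n + M)). split; [lia|]. intros x Hx.
    destruct (Nat.leb_spec (2 * M) x) as [H|H];
      [apply swap_pairs_lt, Hx | specialize (Hclosed x H); lia].
  - intro N. exists (2 * (N + M)). split; [lia|].
    destruct (Nat.leb_spec (2 * M) (2 * (N + M))); [rewrite swap_pairs_even|]; lia.
Qed.

Lemma finite_support_split s N : involution s -> (forall x, N <= x -> s x = x) ->
  exists s1 s2, lf_involution s1 /\ infinite_support s1 /\
    lf_involution s2 /\ infinite_support s2 /\
    forall x, s2 (s1 x) = s x.
Proof.
  intros Hs Hfix.
  assert (Hclosed : forall x, x < 2 * N -> s x < 2 * N).
  { intros x Hx. destruct (Nat.lt_ge_cases (s x) (2 * N)) as [H|H]; [exact H|].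
    pose proof (Hfix (s x) ltac:(lia)) as E. rewrite Hs in E. lia. }
  destruct (patch_lf_involution N (fun x => x) (fun x => eq_refl) (fun x Hx => Hx)) as [H1 I1].
  destruct (patch_lf_involution N s Hs Hclosed) as [H2 I2].
  exists (patch N (fun x => x)), (patch N s). repeat split; try apply H1; try apply H2; auto.
  intro x. unfold patch. destruct (Nat.leb_spec (2 * N) x) as [H|H].
  - pose proof (swap_pairs_ge x N H).
    destruct (Nat.leb_spec (2 * N) (swap_pairs x)); [|lia].
    rewrite swap_pairs_involution, Hfix by lia. reflexivity.
  - destruct (Nat.leb_spec (2 * N) x); [lia | reflexivity].
Qed.

Section LevelSplit.
Variable s : nat -> nat.
Hypothesis s_inv : involution s.

Definition reach (n : nat) : nat := list_max (map s (seq 0 n)).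

Lemma reach_spec n x : x < n -> s x <= reach n.
Proof. intro Hx. apply list_max_ge, in_map, in_seq. lia. Qed.

Fixpoint level (q : nat) : nat :=
  match q with 0 => 0 | S q' => S (max (level q') (reach (level q'))) end.

Lemma level_increasing : increasing level.
Proof. intro q. simpl. lia. Qed.

Lemma level_s q x : x < level q -> s x < level (S q).
Proof. intro Hx. pose proof (reach_spec _ _ Hx). simpl. lia. Qed.

Lemma level_unbounded x : exists q, x < level q.
Proof. exists (S x). pose proof (increasing_ge level (S x) level_increasing). lia. Qed.

Lemma level_mono q : level q <= level (S q).
Proof. apply Nat.lt_le_incl, level_increasing. Qed.

Definition pair_level (x : nat) : nat := segment level (min x (s x)).

Lemma pair_level_s x : pair_level (s x) = pair_level x.
Proof. unfold pair_level. rewrite s_inv, Nat.min_comm. reflexivity. Qed.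

Definition split_at (b : bool) (x : nat) : nat :=
  if Bool.eqb (Nat.even (pair_level x)) b then s x else x.

Lemma split_at_involution b : involution (split_at b).
Proof.
  intro x. unfold split_at at 2. destruct (Bool.eqb (Nat.even (pair_level x)) b) eqn:E;
    unfold split_at; [rewrite pair_level_s, E, s_inv | rewrite E]; reflexivity.
Qed.

(* A pair meeting [level q] starts at some level [p < q] and ends below [level (p + 2)]; it leaves
   [level q] only if [p = q - 1], which has the other parity. *)
Lemma split_at_closed b q x : Nat.even q = b -> x < level q -> split_at b x < level q.
Proof.
  intros Hq Hx. unfold split_at. destruct (Bool.eqb (Nat.even (pair_level x)) b) eqn:E; [|exact Hx].
  apply Bool.eqb_prop in E.
  destruct (Nat.le_gt_cases x (s x)) as [Hle|Hgt]; [|lia].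
  unfold pair_level in E. rewrite Nat.min_l in E by exact Hle.
  pose proof (segment_spec level eq_refl level_mono level_unbounded x) as Hp.
  set (p := segment level x) in *.
  assert (Hpq : p < q).
  { destruct (Nat.lt_ge_cases p q) as [H|H]; [exact H|].
    pose proof (increasing_le level q p level_increasing H). lia. }
  assert (Hpq2 : S (S p) <= q).
  { destruct (Nat.eq_dec (S p) q) as [<-|]; [|lia].
    rewrite Nat.even_succ, <- Nat.negb_even, E in Hq. destruct b; discriminate. }
  pose proof (level_s (S p) x (proj2 Hp)).
  pose proof (increasing_le level (S (S p)) q level_increasing Hpq2). lia.
Qed.

Lemma split_at_lf b : lf_involution (split_at b).
Proof.
  split; [apply split_at_involution|]. intro n.
  set (q := 2 * n + (if b then 0 else 1)).
  exists (level q). split.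
  - pose proof (increasing_ge level q level_increasing). lia.
  - intros x Hx. apply split_at_closed; [|exact Hx]. unfold q. destruct b;
      rewrite ?Nat.add_0_r, ?Nat.even_add, Nat.even_mul; reflexivity.
Qed.

Lemma split_at_comp x : split_at true (split_at false x) = s x.
Proof.
  unfold split_at at 2. destruct (Nat.even (pair_level x)) eqn:E; simpl; unfold split_at.
  - rewrite E. reflexivity.
  - rewrite pair_level_s, E. reflexivity.
Qed.
End LevelSplit.

Lemma involution_product_lf s : involution s ->
  exists s0 s1, lf_involution s0 /\ lf_involution s1 /\ forall x, s1 (s0 x) = s x.
Proof.
  intro Hs. exists (split_at s false), (split_at s true).
  split; [|split]; [apply split_at_lf, Hs .. | apply split_at_comp, Hs].
Qed.

(** * Generating all permutations of nat *)

Section Generation.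
Variable K : (nat -> nat) -> Prop.
Hypothesis HK : is_subgroup K.
Variable a : nat -> nat.
Hypothesis Ha : forall m n, a m = a n -> m = n.
Hypothesis shifts_in : forall j, increasing j -> exists h, K h /\ forall i, h (a i) = a (j i).
Hypothesis universal_in : K (lift a universal_perm).
Hypothesis swap_pairs_in : K (lift a swap_pairs).
Hypothesis swap_out0_in : K (swap_out a 0).
Hypothesis swap_out1_in : K (swap_out a 1).

(* [lift a s] is the conjugate of [lift a swap_pairs] by [m]. *)
Lemma lift_conj_swap_pairs m mu s : K m -> (forall i, m (a i) = a (mu i)) ->
  (forall i, s (mu (2 * i)) = mu (2 * i + 1)) -> (forall i, s (mu (2 * i + 1)) = mu (2 * i)) ->
  (forall y, (forall i, mu i <> y) -> s y = y) -> K (lift a s).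
Proof.
  intros Km Hm Heven Hodd Hfix.
  destruct (subgroup_inv HK m Km) as [m' [Km' [Hm'm Hmm']]].
  apply mem_ext with (fun y => m (lift a swap_pairs (m' y))).
  - apply (subgroup_comp HK (fun y => lift a swap_pairs (m' y)) m); [|exact Km].
    apply subgroup_comp; assumption.
  - intro y. destruct (dec (exists i, a (mu i) = y)) as [[t <-]|N].
    + rewrite <- (Hm t), Hm'm, lift_a, !Hm, !lift_a by assumption. f_equal.
      destruct (swap_pairs_cases t) as [[i [-> ->]]|[i [-> ->]]]; auto.
    + assert (Nm' : ~ in_range a (m' y)).
      { intros [t Et]. apply N. exists t. rewrite <- Hm, Et. apply Hmm'. }
      rewrite (lift_out a swap_pairs _ Nm'), Hmm'.
      destruct (dec (in_range a y)) as [[n <-]|Ny].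
      * assert (Fix : s n = n)
          by (apply Hfix; intros i E; apply N; exists i; rewrite E; reflexivity).
        rewrite lift_a, Fix by assumption. reflexivity.
      * rewrite lift_out; auto.
Qed.

Lemma lf_perm_after_shift k p : increasing k -> bijective p -> locally_finite p ->
  exists m, K m /\ forall i, m (a i) = a (k (p i)).
Proof.
  intros Hk Hp Hlf.
  destruct (universal_perm_universal p Hp Hlf) as [j [Hj Hconj]].
  destruct (shifts_in k Hk) as [hk [Khk Ehk]].
  destruct (shifts_in j Hj) as [hj [Khj Ehj]].
  destruct (subgroup_inv HK hj Khj) as [hj' [Khj' [Ehj' _]]].
  exists (fun y => hk (hj' (lift a universal_perm (hj y)))). split.
  - apply (subgroup_comp HK (fun y => hj' (lift a universal_perm (hj y))) hk); [|exact Khk].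
    apply (subgroup_comp HK (fun y => lift a universal_perm (hj y)) hj'); [|exact Khj'].
    apply subgroup_comp; assumption.
  - intro i. rewrite Ehj, lift_a, Hconj, <- Ehj, Ehj', Ehk by assumption. reflexivity.
Qed.

Lemma lift_lf_involution_infinite s : lf_involution s -> infinite_support s -> K (lift a s).
Proof.
  intros [Hs Hlf] Hinf. set (k := support_enum s). set (t := compressed s).
  assert (Ht : forall i, k (t i) = s (k i)) by (intro; apply support_enum_compressed; assumption).
  destruct (fixed_point_free_pairing t (compressed_involution s Hs Hinf)
    (compressed_fixed_point_free s Hs Hinf) (compressed_lf s Hs Hlf Hinf)) as [p [Hp [Hplf Hpair]]].
  destruct (lf_perm_after_shift k p (support_enum_increasing s Hinf) Hp Hplf) as [m [Km Hm]].
  apply (lift_conj_swap_pairs m (fun i => k (p i)) s Km Hm).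
  - intro i. rewrite <- Ht, Hpair. reflexivity.
  - intro i. rewrite <- Hpair, Ht, Hs. reflexivity.
  - intros y N. destruct (dec (s y = y)) as [E|E]; [exact E | exfalso].
    destruct (support_enum_onto s Hinf y E) as [i <-].
    destruct Hp as [p' [_ Hpp']]. apply (N (p' i)). rewrite Hpp'. reflexivity.
Qed.

Lemma lift_lf_involution s : lf_involution s -> K (lift a s).
Proof.
  intros [Hs Hlf]. destruct (dec (infinite_support s)) as [Hinf|Hfin].
  { apply lift_lf_involution_infinite; [split|]; assumption. }
  assert (HN : exists N, forall x, N <= x -> s x = x).
  { apply NNPP. intro H. apply Hfin. intro N. apply NNPP. intro H'. apply H. exists N.
    intros x Hx. apply NNPP. intro E. apply H'. exists x. split; assumption. }
  destruct HN as [N HN].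
  destruct (finite_support_split s N Hs HN) as [s1 [s2 [H1 [I1 [H2 [I2 E]]]]]].
  apply mem_ext with (fun y => lift a s2 (lift a s1 y)).
  - apply (subgroup_comp HK); apply lift_lf_involution_infinite; assumption.
  - intro y. rewrite <- (lift_comp a Ha). f_equal. apply functional_extensionality, E.
Qed.

Lemma lift_involution s : involution s -> K (lift a s).
Proof.
  intro Hs. destruct (involution_product_lf s Hs) as [s0 [s1 [H0 [H1 E]]]].
  apply mem_ext with (fun y => lift a s1 (lift a s0 y)).
  - apply (subgroup_comp HK); apply lift_lf_involution; assumption.
  - intro y. rewrite <- (lift_comp a Ha). f_equal. apply functional_extensionality, E.
Qed.

Theorem generation f : bijective f -> K f.
Proof.
  apply subgroup_of_involutions; [exact HK|].
  apply (involution_in_subgroup K HK a Ha swap_out0_in swap_out1_in lift_involution).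
Qed.
End Generation.

(** * Labelling the tree *)

Fixpoint rev_prefix (c : nat -> nat) (n : nat) : list nat :=
  match n with 0 => [] | S n' => c n' :: rev_prefix c n' end.

Lemma length_rev_prefix c n : length (rev_prefix c n) = n.
Proof. induction n as [|n IH]; simpl; auto. Qed.

Lemma last_rev_prefix c n : last (rev_prefix c (S n)) 0 = c 0.
Proof.
  induction n as [|n IH]; [reflexivity|].
  change (last (c (S n) :: rev_prefix c (S n)) 0 = c 0). rewrite <- IH. reflexivity.
Qed.

Lemma rev_prefix_zeros c p q : (forall t, t < q -> c (p + t) = 0) ->
  rev_prefix c (p + q) = repeat 0 q ++ rev_prefix c p.
Proof.
  induction q as [|q IH]; intro H; [rewrite Nat.add_0_r; reflexivity|].
  replace (p + S q) with (S (p + q)) by lia. simpl. rewrite H, IH by auto. reflexivity.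
Qed.

(* Words are stored last letter first.  A gap word [g_n; ...; g_1; 2 * j_0] is expanded to the
   0/1-word [0^g_n 1 ... 0^g_1 1 0^j_0 1]; the parity of the oldest letter keeps gap words
   apart from expanded words. *)
Fixpoint unary_expand (r : list nat) : list nat :=
  match r with
  | [] => []
  | [y] => repeat 0 (Nat.div2 y) ++ [1]
  | y :: r' => repeat 0 y ++ 1 :: unary_expand r'
  end.

Definition gap_word (r : list nat) : Prop := r <> [] /\ Nat.even (last r 0) = true.

Lemma repeat_0_1_inj k l u v : repeat 0 k ++ 1 :: u = repeat 0 l ++ 1 :: v -> k = l /\ u = v.
Proof.
  revert l. induction k as [|k IH]; intros [|l] E; simpl in E; try discriminate.
  - injection E as E. auto.
  - injection E as E. apply IH in E. intuition.
Qed.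

Lemma last_app_cons (l u : list nat) x d : u <> [] -> last (l ++ x :: u) d = last u d.
Proof.
  intro Hu. rewrite (app_removelast_last d Hu) at 1.
  rewrite app_comm_cons, app_assoc, last_last. reflexivity.
Qed.

Lemma unary_expand_last r : r <> [] -> unary_expand r <> [] /\ last (unary_expand r) 0 = 1.
Proof.
  induction r as [|y [|z r] IH]; intro Hr; [contradiction| |].
  - simpl. split; [destruct (Nat.div2 y); discriminate | apply last_last].
  - destruct (IH ltac:(discriminate)) as [Hne Hlast].
    change (unary_expand (y :: z :: r)) with (repeat 0 y ++ 1 :: unary_expand (z :: r)).
    split; [destruct y; discriminate|].
    rewrite last_app_cons by exact Hne. exact Hlast.
Qed.

Lemma unary_expand_not_gap_word r : r <> [] -> ~ gap_word (unary_expand r).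
Proof. intros Hr [_ E]. rewrite (proj2 (unary_expand_last r Hr)) in E. discriminate. Qed.

Lemma unary_expand_inj r r' :
  gap_word r -> gap_word r' -> unary_expand r = unary_expand r' -> r = r'.
Proof.
  revert r'. induction r as [|y r IH]; intros r' [Hr He] Hr' E; [contradiction|].
  destruct r' as [|y' r']; [destruct Hr'; contradiction|]. destruct Hr' as [_ He'].
  destruct r as [|z r], r' as [|z' r'].
  - simpl in E, He, He'. apply app_inj_tail, proj1, (f_equal (@length nat)) in E.
    rewrite !repeat_length in E.
    rewrite (Nat.div2_odd y), (Nat.div2_odd y'), E. unfold Nat.odd. rewrite He, He'. reflexivity.
  - exfalso.
    change (repeat 0 (Nat.div2 y) ++ [1] = repeat 0 y' ++ 1 :: unary_expand (z' :: r')) in E.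
    apply repeat_0_1_inj, proj2 in E. symmetry in E. revert E.
    apply unary_expand_last. discriminate.
  - exfalso. change (repeat 0 y ++ 1 :: unary_expand (z :: r) = repeat 0 (Nat.div2 y') ++ [1]) in E.
    apply repeat_0_1_inj, proj2 in E. revert E. apply unary_expand_last. discriminate.
  - change (repeat 0 y ++ 1 :: unary_expand (z :: r) =
            repeat 0 y' ++ 1 :: unary_expand (z' :: r')) in E.
    apply repeat_0_1_inj in E. destruct E as [-> E]. f_equal.
    apply IH; [split; [discriminate | exact He] | split; [discriminate | exact He'] | exact E].
Qed.

Section GapsAndMarks.
Variable j : nat -> nat.
Hypothesis j_incr : increasing j.

Definition gaps (i : nat) : nat := match i with 0 => 2 * j 0 | S i' => j (S i') - j i' - 1 end.

(* [marks 0 = 1] is the final letter of [0^j_0 1]; after it, [marks (S n) = 1] iff [n] is a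
   value of [j]. *)
Definition marks (n : nat) : nat :=
  match n with 0 => 1 | S n' => if dec (exists k, j k = n') then 1 else 0 end.

Lemma gaps_gap_word i : gap_word (rev_prefix gaps (S i)).
Proof.
  split; [discriminate|]. rewrite last_rev_prefix. unfold gaps. rewrite Nat.even_mul. reflexivity.
Qed.

Lemma unary_expand_gaps i : unary_expand (rev_prefix gaps (S i)) = rev_prefix marks (S (j i)).
Proof.
  induction i as [|i IH].
  - change (repeat 0 (Nat.div2 (2 * j 0)) ++ [1] = rev_prefix marks (1 + j 0)).
    rewrite Nat.div2_double, rev_prefix_zeros; [reflexivity|].
    intros t Ht. simpl. destruct (dec (exists k, j k = t)) as [[k Ek]|]; [|reflexivity].
    pose proof (increasing_le j 0 k j_incr ltac:(lia)). lia.
  - change (repeat 0 (gaps (S i)) ++ 1 :: unary_expand (rev_prefix gaps (S i))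
            = rev_prefix marks (S (j (S i)))).
    rewrite IH. simpl gaps. pose proof (j_incr i) as Hi.
    replace (S (j (S i))) with (S (S (j i)) + (j (S i) - j i - 1)) by lia.
    rewrite rev_prefix_zeros.
    + f_equal. simpl. destruct (dec (exists k, j k = j i)) as [_|N]; [reflexivity | exfalso; eauto].
    + intros t Ht. simpl.
      destruct (dec (exists k, j k = S (j i + t))) as [[k Ek]|]; [exfalso | reflexivity].
      destruct (Nat.le_gt_cases k i) as [Hk|Hk].
      * pose proof (increasing_le j k i j_incr Hk). lia.
      * pose proof (increasing_le j (S i) k j_incr Hk). lia.
Qed.
End GapsAndMarks.

Section Labelling.
Context {Omega : Type}.
Variable b0 : Omega.
Variable D : nat -> list Omega -> Prop.
Hypothesis D_length : forall i s, D i s -> length s = i.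
Hypothesis D_nonempty : forall i, exists s, D i s.
Hypothesis D_extend :
  forall i s, D i s -> forall l : list Omega, exists b, ~ In b l /\ D (S i) (s ++ [b]).

(* Words (last letter first) are labelled in the order of their codes; [table n] lists the
   labels of the codes below [n], and a new label avoids all of them. *)
Fixpoint path_in (r : list nat) (tb : list Omega) : list Omega :=
  match r with [] => [] | x :: r' => path_in r' tb ++ [nth (encode (x :: r')) tb b0] end.

Definition new_label (n : nat) (tb : list Omega) : Omega :=
  let r := decode n in
  epsilon (inhabits b0) (fun b => ~ In b tb /\ D (length r) (path_in (tl r) tb ++ [b])).

Fixpoint table (n : nat) : list Omega :=
  match n with 0 => [] | S n' => table n' ++ [new_label n' (table n')] end.

Definition label (r : list nat) : Omega := nth (encode r) (table (S (encode r))) b0.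

Fixpoint label_path (r : list nat) : list Omega :=
  match r with [] => [] | x :: r' => label_path r' ++ [label (x :: r')] end.

Lemma length_table n : length (table n) = n.
Proof. induction n as [|n IH]; [reflexivity|]. simpl. rewrite length_app, IH. simpl. lia. Qed.

Lemma nth_table n m k : n <= m -> k < n -> nth k (table m) b0 = nth k (table n) b0.
Proof.
  induction 1 as [|m Hnm IH]; [reflexivity|]. intro Hk. simpl.
  rewrite app_nth1 by (rewrite length_table; lia). auto.
Qed.

Lemma nth_table_label r n : encode r < n -> nth (encode r) (table n) b0 = label r.
Proof. intro H. unfold label. apply nth_table; lia. Qed.

Lemma label_new r : label r = new_label (encode r) (table (encode r)).
Proof.
  unfold label. simpl. rewrite app_nth2 by (rewrite length_table; lia).
  rewrite length_table, Nat.sub_diag. reflexivity.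
Qed.

Lemma path_in_table r n : encode r < n -> path_in r (table n) = label_path r.
Proof.
  induction r as [|x r IH]; [reflexivity|]. intro H. cbn [path_in label_path].
  rewrite nth_table_label, IH by (pose proof (encode_cons_lt x r); lia). reflexivity.
Qed.

Lemma label_spec x r : D (length r) (label_path r) ->
  ~ In (label (x :: r)) (table (encode (x :: r))) /\ D (S (length r)) (label_path (x :: r)).
Proof.
  intro Hr. pose proof (decode_encode (x :: r)) as Dn. pose proof (label_new (x :: r)) as Ln.
  set (n := encode (x :: r)) in *.
  assert (E : path_in r (table n) = label_path r) by apply path_in_table, encode_cons_lt.
  assert (Ex : exists b, ~ In b (table n) /\
      D (length (decode n)) (path_in (tl (decode n)) (table n) ++ [b])).
  { rewrite Dn. cbn [tl length]. rewrite E. apply D_extend, Hr. }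
  destruct (epsilon_spec (inhabits b0) _ Ex) as [S1 S2].
  fold (new_label n (table n)) in S1, S2. rewrite <- Ln in S1, S2.
  rewrite Dn in S2. cbn [tl length] in S2. rewrite E in S2.
  split; assumption.
Qed.

Lemma label_path_D r : D (length r) (label_path r).
Proof.
  induction r as [|x r IH].
  - destruct (D_nonempty 0) as [[|b s] Hs]; [exact Hs | discriminate (D_length _ _ Hs)].
  - apply (label_spec x r IH).
Qed.

Lemma label_inj r r' : r <> [] -> r' <> [] -> label r = label r' -> r = r'.
Proof.
  assert (Fresh : forall w, w <> [] -> ~ In (label w) (table (encode w))).
  { intros [|x w] Hw; [contradiction|]. apply label_spec, label_path_D. }
  intros Hr Hr' E. destruct (Nat.lt_trichotomy (encode r) (encode r')) as [L|[L|L]].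
  - exfalso. apply (Fresh r' Hr'). rewrite <- E, <- (nth_table_label r _ L).
    apply nth_In. rewrite length_table. exact L.
  - apply encode_inj, L.
  - exfalso. apply (Fresh r Hr). rewrite E, <- (nth_table_label r' _ L).
    apply nth_In. rewrite length_table. exact L.
Qed.

Lemma prefix_label_path c i :
  prefix (fun n => label (rev_prefix c (S n))) i = label_path (rev_prefix c i).
Proof.
  unfold prefix. induction i as [|i IH]; [reflexivity|].
  rewrite seq_S, map_app, IH. reflexivity.
Qed.

Definition swap_labels (y : Omega) : Omega :=
  match dec (exists r, gap_word r /\ label r = y) with
  | left H => label (unary_expand (choose H))
  | right _ =>
    match dec (exists r, gap_word r /\ label (unary_expand r) = y) with
    | left H => label (choose H)
    | right _ => y
    end
  end.

Lemma swap_labels_gap r : gap_word r -> swap_labels (label r) = label (unary_expand r).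
Proof.
  intro Hr. unfold swap_labels.
  destruct (dec (exists r', gap_word r' /\ label r' = label r)) as [H|N].
  - destruct (choose_spec H) as [H1 H2]. apply label_inj in H2; [|apply H1 | apply Hr].
    rewrite H2. reflexivity.
  - exfalso. apply N. eauto.
Qed.

Lemma swap_labels_expand r : gap_word r -> swap_labels (label (unary_expand r)) = label r.
Proof.
  intro Hr. pose proof (proj1 (unary_expand_last r (proj1 Hr))) as Hne. unfold swap_labels.
  destruct (dec (exists r', gap_word r' /\ label r' = label (unary_expand r))) as [[r' [H1 H2]]|_].
  - exfalso. apply label_inj in H2; [|apply H1 | exact Hne]. subst r'.
    apply (unary_expand_not_gap_word r (proj1 Hr) H1).
  - destruct (dec (exists r', gap_word r' /\ label (unary_expand r') = label (unary_expand r)))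
      as [H|N].
    + destruct (choose_spec H) as [H1 H2].
      apply label_inj, unary_expand_inj in H2; auto; [|apply unary_expand_last, H1].
      rewrite H2. reflexivity.
    + exfalso. apply N. eauto.
Qed.

Lemma swap_labels_involution y : swap_labels (swap_labels y) = y.
Proof.
  destruct (dec (exists r, gap_word r /\ label r = y)) as [[r [Hr <-]]|N1].
  { rewrite swap_labels_gap, swap_labels_expand; auto. }
  destruct (dec (exists r, gap_word r /\ label (unary_expand r) = y)) as [[r [Hr <-]]|N2].
  { rewrite swap_labels_expand, swap_labels_gap; auto. }
  assert (E : swap_labels y = y).
  { unfold swap_labels. destruct (dec (exists r, gap_word r /\ label r = y)); [contradiction|].
    destruct (dec (exists r, gap_word r /\ label (unary_expand r) = y));
      [contradiction | reflexivity]. }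
  rewrite !E. reflexivity.
Qed.

Section Shifts.
Variable G : (Omega -> Omega) -> Prop.
Variable alpha : nat -> Omega.
Hypothesis D_branches : forall beta : nat -> Omega, (forall i, D i (prefix beta i)) ->
  exists g, G g /\ forall i, beta i = g (alpha i).

Lemma branch_in_G c : exists g, G g /\ forall i, label (rev_prefix c (S i)) = g (alpha i).
Proof.
  apply D_branches. intro i. rewrite prefix_label_path.
  pose proof (label_path_D (rev_prefix c i)) as P. rewrite length_rev_prefix in P. exact P.
Qed.

(* The branches of [gaps j] and [marks j] are exchanged, the [i]-th node going to the [j i]-th. *)
Lemma swap_labels_shift j : increasing j ->
  exists gc gd, G gc /\ G gd /\ forall i, swap_labels (gc (alpha i)) = gd (alpha (j i)).
Proof.
  intro Hj.
  destruct (branch_in_G (gaps j)) as [gc [Gc Ec]], (branch_in_G (marks j)) as [gd [Gd Ed]].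
  exists gc, gd. repeat split; [assumption | assumption|]. intro i.
  rewrite <- Ec, <- Ed, swap_labels_gap, unary_expand_gaps by (apply gaps_gap_word || exact Hj).
  reflexivity.
Qed.
End Shifts.
End Labelling.

Section Transfer.
Context {Omega : Type}.
Variable e : nat -> Omega.
Variable e' : Omega -> nat.
Hypothesis e_e' : forall y, e (e' y) = y.
Hypothesis e'_e : forall n, e' (e n) = n.

Definition to_Omega (F : nat -> nat) (y : Omega) : Omega := e (F (e' y)).

Definition to_nat (f : Omega -> Omega) (n : nat) : nat := e' (f (e n)).

Lemma to_Omega_to_nat f y : to_Omega (to_nat f) y = f y.
Proof. unfold to_Omega, to_nat. rewrite !e_e'. reflexivity. Qed.

Lemma to_Omega_bijective F : bijective F -> Sym Omega (to_Omega F).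
Proof.
  intros [F' [H1 H2]]. exists (to_Omega F'). unfold to_Omega.
  split; intro y; rewrite e'_e, ?H1, ?H2, e_e'; reflexivity.
Qed.

Lemma to_nat_bijective f : bijective f -> bijective (to_nat f).
Proof.
  intros [f' [H1 H2]]. exists (to_nat f'). unfold to_nat.
  split; intro n; rewrite e_e', ?H1, ?H2, e'_e; reflexivity.
Qed.

Lemma pullback_subgroup H : is_subgroup H -> is_subgroup (fun F => H (to_Omega F)).
Proof.
  intro HH. repeat split.
  - intros F HF. apply mem_ext with (to_nat (to_Omega F)).
    + apply to_nat_bijective, (subgroup_bijective HH), HF.
    + intro n. unfold to_nat, to_Omega. rewrite !e'_e. reflexivity.
  - apply mem_ext with (fun y => y); [apply (subgroup_id HH)|].
    intro y. unfold to_Omega. rewrite e_e'. reflexivity.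
  - intros F F' HF HF'. apply mem_ext with (fun y => to_Omega F' (to_Omega F y)).
    + apply (subgroup_comp HH); assumption.
    + intro y. unfold to_Omega. rewrite e'_e. reflexivity.
  - intros F HF. destruct (subgroup_inv HH _ HF) as [h [Hh [Eh1 Eh2]]].
    exists (to_nat h). split; [|split].
    + apply mem_ext with h; [exact Hh|]. intro y. symmetry. apply to_Omega_to_nat.
    + intro n. unfold to_nat. specialize (Eh1 (e n)). unfold to_Omega in Eh1. rewrite e'_e in Eh1.
      rewrite Eh1, e'_e. reflexivity.
    + intro n. specialize (Eh2 (e n)). unfold to_Omega in Eh2.
      apply (f_equal e') in Eh2. rewrite !e'_e in Eh2. exact Eh2.
Qed.
End Transfer.

Lemma subgroup_preccurlyeq_Sym {T : Type} (G : (T -> T) -> Prop) :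
  is_subgroup G -> preccurlyeq G (Sym T).
Proof.
  intro HG. exists []. split; [intros _ []|].
  intros f Gf H _ Hsub. apply Hsub. left. apply (subgroup_bijective HG), Gf.
Qed.

Section Generators.
Variable Omega : Type.
Variable e : nat -> Omega.
Variable e' : Omega -> nat.
Hypothesis e_e' : forall y, e (e' y) = y.
Hypothesis e'_e : forall n, e' (e n) = n.
Variable G : (Omega -> Omega) -> Prop.
Variable alpha : nat -> Omega.
Hypothesis alpha_inj : forall m n, alpha m = alpha n -> m = n.
Variable D : nat -> list Omega -> Prop.
Hypothesis D_length : forall i s, D i s -> length s = i.
Hypothesis D_nonempty : forall i, exists s, D i s.
Hypothesis D_extend :
  forall i s, D i s -> forall l : list Omega, exists b, ~ In b l /\ D (S i) (s ++ [b]).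
Hypothesis D_branches : forall beta : nat -> Omega, (forall i, D i (prefix beta i)) ->
  exists g, G g /\ forall i, beta i = g (alpha i).

Definition alpha_nat (n : nat) : nat := e' (alpha n).

Lemma alpha_nat_inj m n : alpha_nat m = alpha_nat n -> m = n.
Proof.
  intro E. apply alpha_inj. rewrite <- (e_e' (alpha m)), <- (e_e' (alpha n)). f_equal. exact E.
Qed.

Let W := swap_labels (alpha 0) D.

Definition generators : list (Omega -> Omega) :=
  [W; to_Omega e e' (lift alpha_nat universal_perm); to_Omega e e' (lift alpha_nat swap_pairs);
   to_Omega e e' (swap_out alpha_nat 0); to_Omega e e' (swap_out alpha_nat 1)].

Lemma generators_Sym u : In u generators -> Sym Omega u.
Proof.
  pose proof (to_Omega_bijective e e' e_e' e'_e) as Hbij.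
  intros [<-|[<-|[<-|[<-|[<-|[]]]]]].
  - exists W. split; intro; apply swap_labels_involution; assumption.
  - apply Hbij, (lift_bijective alpha_nat alpha_nat_inj), universal_perm_bijective.
  - apply Hbij, (lift_bijective alpha_nat alpha_nat_inj), involution_bijective.
    apply swap_pairs_involution.
  - apply Hbij, involution_bijective, swap_out_involution; [exact alpha_nat_inj | lia].
  - apply Hbij, involution_bijective, swap_out_involution; [exact alpha_nat_inj | lia].
Qed.

Section GeneratedSubgroup.
Variable H : (Omega -> Omega) -> Prop.
Hypothesis HH : is_subgroup H.
Hypothesis G_in_H : forall g, G g -> H g.
Hypothesis generators_in_H : forall u, In u generators -> H u.

Lemma shifts_in_H j : increasing j ->
  exists h, H (to_Omega e e' h) /\ forall i, h (alpha_nat i) = alpha_nat (j i).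
Proof.
  intro Hj. destruct (swap_labels_shift (alpha 0) D D_length D_nonempty D_extend G alpha
    D_branches j Hj) as [gc [gd [Gc [Gd E]]]].
  destruct (subgroup_inv HH gd (G_in_H _ Gd)) as [gd' [Hgd' [Egd' _]]].
  exists (to_nat e e' (fun y => gd' (W (gc y)))). split.
  - apply mem_ext with (fun y => gd' (W (gc y))).
    + apply (subgroup_comp HH); [apply (subgroup_comp HH)|]; auto.
      apply generators_in_H. simpl. auto.
    + intro y. symmetry. exact (to_Omega_to_nat e e' e_e' _ y).
  - intro i. unfold to_nat, alpha_nat. rewrite e_e', E, Egd'. reflexivity.
Qed.

Lemma Sym_in_H f : Sym Omega f -> H f.
Proof.
  intro Hf. set (K F := H (to_Omega e e' F)).
  assert (KF : K (to_nat e e' f)).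
  { apply (generation K (pullback_subgroup e e' e_e' e'_e H HH) alpha_nat alpha_nat_inj
      shifts_in_H); try (apply generators_in_H; simpl; tauto).
    apply to_nat_bijective, Hf; assumption. }
  apply mem_ext with (to_Omega e e' (to_nat e e' f)); [exact KF|].
  apply (to_Omega_to_nat e e' e_e').
Qed.
End GeneratedSubgroup.

Lemma Sym_preccurlyeq : preccurlyeq (Sym Omega) G.
Proof.
  exists generators. split; [exact generators_Sym|].
  intros f Hf H HH Hsub. apply (Sym_in_H H HH); auto.
Qed.
End Generators.

Theorem lemma5p2 (Omega : Type) (HOmega : countably_infinite Omega)
  (G : (Omega -> Omega) -> Prop) (HG : is_subgroup G)
  (alpha : nat -> Omega) (Halpha : forall m n, alpha m = alpha n -> m = n)
  (D : nat -> list Omega -> Prop)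
  (HDlen : forall i s, D i s -> length s = i)
  (HDne : forall i, exists s, D i s)
  (HD1 : forall i s b, D (S i) (s ++ [b]) -> D i s)
  (HD2 : forall i s, D i s ->
           forall l : list Omega, exists b, ~ In b l /\ D (S i) (s ++ [b]))
  (HD3 : forall beta : nat -> Omega, (forall i, D i (prefix beta i)) ->
           exists g, G g /\ forall i, beta i = g (alpha i)) :
  approx G (Sym Omega).
Proof.
  destruct HOmega as [e [e_inj e_surj]].
  set (e' y := choose (e_surj y)).
  assert (e_e' : forall y, e (e' y) = y) by (intro y; exact (choose_spec (e_surj y))).
  assert (e'_e : forall n, e' (e n) = n) by (intro n; apply e_inj, e_e').
  (* [HD1] is not needed: the branches used are built by successive extensions ([HD2]), so
     their prefixes lie in [D] by construction. *)
  split.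
  - apply subgroup_preccurlyeq_Sym, HG.
  - apply (Sym_preccurlyeq Omega e e' e_e' e'_e G alpha Halpha D HDlen HDne HD2 HD3).
Qed.
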